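(* Let $n\ge2$ and consider admissible 4-tuples $(\sigma_0,\sigma_\infty,\sigma_1,\tau)\in S_{2n}^4$. If such a tuple is special and $\sigma_1$ and $\tau$ have disjoint supports, then $\sigma_0=\prod_{i=1}^{n}(i,\,2n+1-i)$, $\sigma_1\tau=\prod_{i=1}^{n-1}(i,\,2n-i)$, and $\tau$ is one of the $n-1$ transpositions $(i,2n-i)$, $1\le i\le n-1$ (each choice giving a special tuple). Two distinct such special tuples are conjugate if and only if they are exchanged by conjugation by $\sigma_\infty^n$; such a conjugation fixes the tuple only when $n$ is even and $\tau=(n/2,\,3n/2)$. Consequently the number of conjugacy classes of admissible 4-tuples with $\sigma_1$ and $\tau$ disjoint is $\lfloor n/2\rfloor$.
   Context: Permutation products are read left to right ($\sigma\sigma'$: first $\sigma$, then $\sigma'$). An admissible 4-tuple (the case $\deg D=4$ with maximal branching, i.e. $A^2$ branched over $0,1,\infty$ and exactly one further point, $\deg A=n$) is $(\sigma_0,\sigma_\infty,\sigma_1,\tau)\in S_{2n}^4$ with $\sigma_0$ a product of $n$ disjoint transpositions, $\sigma_\infty$ a $2n$-cycle, $\sigma_1$ a product of $n-2$ disjoint transpositions, $\tau$ a transposition, and $\sigma_0\sigma_\infty\sigma_1\tau=\mathrm{id}$. Tuples $\Sigma,\Sigma'$ are conjugate if $\Sigma'=\gamma^{-1}\Sigma\gamma$ componentwise for some $\gamma\in S_{2n}$. A tuple is special if $\sigma_\infty=(2n,2n-1,\dots,1)$ (the cycle $2n\mapsto2n-1\mapsto\dots\mapsto1\mapsto2n$)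 and $\sigma_1(2n)=\tau(2n)=2n$; every conjugacy class contains special tuples. *)

(* Points 1..2n of the paper are the ordinals 0..2n-1 of 'I_(2*n)
   (paper label j <-> ordinal j-1).  MathComp's permutation product is read left
   to right ((s * t) x = t (s x), lemma permM), as in the paper, and
   conjugation x ^ g = g^-1 * x * g. *)
From mathcomp Require Import all_boot all_fingroup.
Set Implicit Arguments. Unset Strict Implicit. Unset Printing Implicit Defensive.
Local Open Scope group_scope.

Definition lab (m i : nat) : option 'I_m := insub i.-1.

(* the transposition (i, j) of paper labels (identity if a label is out of range) *)
Definition tpn (m i j : nat) : 'S_m :=
  match lab m i, lab m j with Some a, Some b => tperm a b | _, _ => 1 end.

Definition is_transp m (s : 'S_m) : bool :=
  [exists a : 'I_m, exists b : 'I_m, (a != b) && (s == tperm a b)].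

Definition is_prod_disj_transp m (k : nat) (s : 'S_m) : bool :=
  [exists ab : k.-tuple ('I_m * 'I_m),
     uniq (flatten [seq [:: p.1; p.2] | p <- ab]) &&
     (s == \prod_(p <- ab) tperm p.1 p.2)].

Definition is_cycle m (k : nat) (s : 'S_m) : bool :=
  [exists x, (#|porbit s x| == k) && [forall y, (y \notin porbit s x) ==> (s y == y)]].

Definition psupp m (s : 'S_m) : {set 'I_m} := [set x | s x != x].

Definition tuple4 (m : nat) := ('S_m * 'S_m * 'S_m * 'S_m)%type.
Definition sig0 m (S : tuple4 m) : 'S_m := S.1.1.1.
Definition siginf m (S : tuple4 m) : 'S_m := S.1.1.2.
Definition sig1 m (S : tuple4 m) : 'S_m := S.1.2.
Definition tau m (S : tuple4 m) : 'S_m := S.2.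

Definition admissible (n : nat) (S : tuple4 (2 * n)) : bool :=
  [&& is_prod_disj_transp n (sig0 S), is_cycle (2 * n) (siginf S),
      is_prod_disj_transp (n - 2) (sig1 S), is_transp (tau S) &
      sig0 S * siginf S * sig1 S * tau S == 1].

(* the 2n-cycle 2n -> 2n-1 -> ... -> 1 -> 2n, i.e. x |-> x - 1 mod 2n on ordinals *)
Definition sigma_inf (n : nat) : 'S_(2 * n) := perm (@ord_pred_inj (2 * n)).

Definition special (n : nat) (S : tuple4 (2 * n)) : bool :=
  [&& siginf S == sigma_inf n,
      [forall x : 'I_(2 * n), (val x == (2 * n).-1) ==> (sig1 S x == x)] &
      [forall x : 'I_(2 * n), (val x == (2 * n).-1) ==> (tau S x == x)]].

Definition disj1t m (S : tuple4 m) : bool := [disjoint psupp (sig1 S) & psupp (tau S)].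

Definition conj4 m (S : tuple4 m) (g : 'S_m) : tuple4 m :=
  (sig0 S ^ g, siginf S ^ g, sig1 S ^ g, tau S ^ g).

Definition conjugate4 m (S S' : tuple4 m) : bool := [exists g, S' == conj4 S g].

Definition conj_class m (S : tuple4 m) : {set tuple4 m} := [set S' | conjugate4 S S'].

From mathcomp Require Import all_boot all_fingroup zify.
Set Implicit Arguments. Unset Strict Implicit. Unset Printing Implicit Defensive.
Local Open Scope group_scope.

(* Write rho = sigma_1 tau.  As sigma_1 and tau are involutions with disjoint
   supports, rho is an involution, and the product relation with the standard
   cycle sigma_inf = (x |-> x - 1) gives sigma_0 x = rho x + 1.  Since sigma_0
   is an involution as well, rho (x + 1) = rho x - 1: rho is a reflection of
   Z/2n, and as it fixes the last point it is x |-> -2 - x, whence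
   sigma_0 = (x |-> -1 - x).  The transposition tau, whose support sigma_1
   fixes, is a 2-cycle (a, rho a) of rho, so these tuples are indexed by
   i in [1, n-1].  A permutation conjugating one of them into another one
   centralises sigma_inf and rho, so it is a rotation permuting the two fixed
   points of rho: the identity or sigma_inf^n, which exchanges i and n - i.
   Finally, every admissible tuple with sigma_1 and tau disjoint is conjugate
   to a special one: relabel sigma_inf into the standard cycle, then rotate a
   common fixed point of sigma_1 and tau to the last point.  This leaves the
   classes of the tuples with i <= n/2. *)

(** * The cyclic structure of ['I_m] *)

Lemma ordS_val m (x : 'I_m) : (ordS x : nat) = if x.+1 == m then 0 else x.+1.
Proof.
rewrite /=; case: eqP => [->|neq]; first by rewrite modnn.
by rewrite modn_small //; have := ltn_ord x; lia.
Qed.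

Lemma ord_pred_val m (x : 'I_m) : (ord_pred x : nat) = if (x : nat) == 0 then m.-1 else x.-1.
Proof.
have := ltn_ord x; rewrite /=; case: eqP => [->|nz] lt_x_m.
  by rewrite add0n modn_small //; lia.
have -> : (x + m).-1 = x.-1 + m by lia.
by rewrite modnDr modn_small //; lia.
Qed.

Lemma iter_ordS_val m k (x : 'I_m) : (iter k (@ordS m) x : nat) = (x + k) %% m.
Proof.
elim: k => [|k IH]; first by rewrite addn0 modn_small.
by rewrite iterS /= IH -addn1 modnDml addn1 addnS.
Qed.

Lemma iter_ordS_surj m (x y : 'I_m) : exists k, y = iter k (@ordS m) x.
Proof.
exists (y + (m - x)); apply: ord_inj; rewrite iter_ordS_val.
have lt_x_m := ltn_ord x.
have -> : x + (y + (m - x)) = y + m by lia.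
by rewrite modnDr modn_small.
Qed.

Lemma ordS_intertwined_eq m (v f g : 'I_m -> 'I_m) x :
  (forall y, f (ordS y) = v (f y)) -> (forall y, g (ordS y) = v (g y)) ->
  f x = g x -> f =1 g.
Proof.
move=> fS gS fx y; have [k ->] := iter_ordS_surj x y.
by elim: k => //= k IH; rewrite fS gS IH.
Qed.

Lemma porbit_ord_pred m (x y : 'I_m) : y \in porbit (perm (@ord_pred_inj m)) x.
Proof.
have [k ->] := iter_ordS_surj x y; rewrite porbit_sym; apply/porbitP; exists k.
rewrite permX; elim: k x => // k IH x.
by rewrite iterSr iterS permE ordSK -IH.
Qed.

(** * Involutions and products of disjoint transpositions *)

Section Involutions.
Variable m : nat.
Implicit Types (s t : 'S_m) (a b : 'I_m).

Lemma involutiveP s : involutive s <-> s * s = 1.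
Proof.
split=> [sK | ss1 x]; first by apply/permP => x; rewrite permM perm1 sK.
by rewrite -permM ss1 perm1.
Qed.

Lemma involutiveM s t : commute s t -> involutive s -> involutive t -> involutive (s * t).
Proof.
move=> st /involutiveP ss /involutiveP tt; apply/involutiveP.
by rewrite mulgA -(mulgA s) -st mulgA ss mul1g tt.
Qed.

Lemma commute_tperm s a b : tperm (s a) (s b) = tperm a b -> commute (tperm a b) s.
Proof. by move=> sab; rewrite /commute conjgC tpermJ sab. Qed.

Lemma tpermM_out a b s x : x != a -> x != b -> (tperm a b * s) x = s x.
Proof. by move=> xa xb; rewrite permM tpermD // eq_sym. Qed.

Lemma psupp_tpermM_fix s a b : a != b -> s a = a -> s b = b ->
  psupp (tperm a b * s) = [set a; b] :|: psupp s.
Proof.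
move=> ab sa sb; apply/setP => x; rewrite !inE.
have [->|xa] := eqVneq x a; first by rewrite permM tpermL sb eq_sym.
have [->|xb] := eqVneq x b; first by rewrite permM tpermR sa.
by rewrite tpermM_out.
Qed.

Lemma psupp_tpermM_swap s a : involutive s ->
  psupp (tperm a (s a) * s) = psupp s :\: [set a; s a].
Proof.
move=> sK; apply/setP => x; rewrite !inE.
have [->|xa] := eqVneq x a; first by rewrite permM tpermL sK eqxx.
have [->|xb] := eqVneq x (s a); first by rewrite permM tpermR eqxx.
by rewrite tpermM_out.
Qed.

Definition pair_points (l : seq ('I_m * 'I_m)) : seq 'I_m :=
  flatten [seq [:: p.1; p.2] | p <- l].

Lemma prod_disj_tperm (l : seq ('I_m * 'I_m)) : uniq (pair_points l) ->
  involutive (\prod_(p <- l) tperm p.1 p.2) /\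
  psupp (\prod_(p <- l) tperm p.1 p.2) = [set x in pair_points l].
Proof.
elim: l => [_|[a b] l IH]; rewrite ?big_nil ?big_cons.
  split=> [x|]; first by rewrite !perm1.
  by apply/setP => x; rewrite !inE perm1 eqxx.
rewrite /= !inE negb_or => /andP[/andP[ab a_l] /andP[b_l /IH[lK lsupp]]].
have fix_l x : x \notin pair_points l -> (\prod_(p <- l) tperm p.1 p.2) x = x.
  by move=> x_l; apply/eqP; move/setP/(_ x): (lsupp); rewrite !inE (negbTE x_l) => /negbFE.
have [la lb] := (fix_l a a_l, fix_l b b_l).
split; first by apply: involutiveM => //; [apply: commute_tperm; rewrite la lb | exact: tpermK].
by rewrite psupp_tpermM_fix // lsupp; apply/setP => x; rewrite !inE orbA.
Qed.

Lemma card_pair_points (l : seq ('I_m * 'I_m)) : uniq (pair_points l) ->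
  #|[set x in pair_points l]| = (size l).*2.
Proof.
move=> l_uniq; rewrite cardsE (card_uniqP l_uniq).
by elim: l {l_uniq} => //= p l IH; rewrite IH doubleS.
Qed.

Lemma invol_prod_disj_tperm k s : involutive s -> #|psupp s| = k.*2 ->
  exists2 l : seq ('I_m * 'I_m), size l = k &
    uniq (pair_points l) /\ s = \prod_(p <- l) tperm p.1 p.2.
Proof.
elim: k s => [|k IH] s sK card_s.
  exists [::] => //; split=> //; rewrite big_nil; apply/permP => x; rewrite perm1.
  by move/cards0_eq/setP/(_ x): card_s; rewrite !inE => /negbFE/eqP.
have [a a_s] : exists a, a \in psupp s by apply/card_gt0P; rewrite card_s.
have a_sa : a != s a by move: a_s; rewrite inE eq_sym.
set s' := tperm a (s a) * s.
have s'K : involutive s'.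
  by apply: involutiveM => //; [apply: commute_tperm; rewrite sK tpermC | exact: tpermK].
have card_s' : #|psupp s'| = k.*2.
  rewrite psupp_tpermM_swap // cardsD (setIidPr _); last first.
    by apply/subsetP => x; rewrite !inE => /orP[]/eqP->; rewrite ?sK // eq_sym.
  by rewrite cards2 a_sa card_s doubleS subSS subn1.
have [l size_l [l_uniq s'E]] := IH s' s'K card_s'.
have [s'a s'sa] : s' a = a /\ s' (s a) = s a by rewrite !permM tpermL tpermR sK.
have notin_l x : s' x = x -> x \notin pair_points l.
  move=> s'x; have [_ /setP/(_ x)] := prod_disj_tperm l_uniq.
  by rewrite !inE -s'E s'x eqxx => <-.
exists ((a, s a) :: l); first by rewrite /= size_l.
split; last by rewrite big_cons -s'E /s' mulgA tperm2 mul1g.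
by rewrite /= !inE negb_or a_sa l_uniq !notin_l.
Qed.

Lemma prod_disj_transpP k s :
  reflect (involutive s /\ #|psupp s| = k.*2) (is_prod_disj_transp k s).
Proof.
apply: (iffP existsP) => [[l /andP[l_uniq /eqP->]] | [sK card_s]].
  have [lK lsupp] := prod_disj_tperm l_uniq; split=> //.
  by rewrite lsupp card_pair_points // size_tuple.
have [l size_l [l_uniq sE]] := invol_prod_disj_tperm sK card_s.
have size_l' : size l == k by rewrite size_l.
by exists (Tuple size_l'); apply/andP; split; [exact: l_uniq | rewrite sE].
Qed.

Lemma perm_on_psupp s : perm_on (psupp s) s.
Proof. by rewrite /perm_on; apply/subsetP => x; rewrite !inE. Qed.

Lemma psupp_tperm a b : a != b -> psupp (tperm a b) = [set a; b].
Proof.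
move=> ab; apply/setP => x; rewrite !inE.
case: tpermP => [->|->|/eqP/negbTE-> /eqP/negbTE->]; rewrite eqxx //.
  by rewrite eq_sym ab.
by rewrite orbT ab.
Qed.

Lemma is_transpP s : reflect (exists2 ab : 'I_m * 'I_m, ab.1 != ab.2 & s = tperm ab.1 ab.2)
  (is_transp s).
Proof.
apply: (iffP existsP) => [[a /existsP[b /andP[ab /eqP->]]] | [[a b] /= ab ->]].
  by exists (a, b).
by exists a; apply/existsP; exists b; rewrite ab eqxx.
Qed.

End Involutions.

(** * Conjugation *)

Section Conjugation.
Variable m : nat.
Implicit Types (s g : 'S_m) (S : tuple4 m).

Lemma conjg_permE s s' g : (forall y, s' (g y) = g (s y)) -> s ^ g = s'.
Proof. by move=> sg; apply/permP => x; rewrite -(permKV g x) permJ sg. Qed.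

Lemma psupp_conj s g : psupp (s ^ g) = g @: psupp s.
Proof.
apply/setP => x; rewrite -(permKV g x) mem_imset; last exact: perm_inj.
by rewrite !inE permJ (inj_eq perm_inj).
Qed.

Lemma porbit_conj s g x : porbit (s ^ g) (g x) = g @: porbit s x.
Proof.
apply/setP => y; rewrite -(permKV g y) mem_imset; last exact: perm_inj.
apply/porbitP/porbitP => [[i]|[i ->]].
  by rewrite -conjXg permJ => /perm_inj ->; exists i.
by exists i; rewrite -conjXg permJ.
Qed.

Lemma is_cycle_conj k s g : is_cycle k s -> is_cycle k (s ^ g).
Proof.
case/existsP => x /andP[card_x /forallP fix_out]; apply/existsP; exists (g x).
rewrite porbit_conj card_imset ?card_x; last exact: perm_inj.
apply/forallP => y; rewrite -(permKV g y) mem_imset; last exact: perm_inj.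
by rewrite permJ (inj_eq perm_inj); exact: fix_out.
Qed.

Lemma is_prod_disj_transp_conj k s g :
  is_prod_disj_transp k s -> is_prod_disj_transp k (s ^ g).
Proof.
case/prod_disj_transpP => sK card_s; apply/prod_disj_transpP; split.
  by move=> x; rewrite -(permKV g x) !permJ sK.
by rewrite psupp_conj card_imset //; exact: perm_inj.
Qed.

Lemma is_transp_conj s g : is_transp s -> is_transp (s ^ g).
Proof.
case/is_transpP => [[a b] /= ab ->]; apply/is_transpP; exists (g a, g b).
  by rewrite /= (inj_eq perm_inj).
exact: tpermJ.
Qed.

Lemma conj4_1 S : conj4 S 1 = S.
Proof. by case: S => [[[s0 s] s1] t]; rewrite /conj4 /= !conjg1. Qed.

Lemma conj4M S g h : conj4 (conj4 S g) h = conj4 S (g * h).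
Proof. by rewrite /conj4 /= !conjgM. Qed.

Lemma conjugate4_refl S : conjugate4 S S.
Proof. by apply/existsP; exists 1; rewrite conj4_1. Qed.

Lemma conjugate4_trans S1 S2 S3 : conjugate4 S1 S2 -> conjugate4 S2 S3 -> conjugate4 S1 S3.
Proof.
case/existsP => g /eqP-> /existsP[h /eqP->].
by apply/existsP; exists (g * h); rewrite conj4M.
Qed.

Lemma conjugate4_sym S1 S2 : conjugate4 S1 S2 -> conjugate4 S2 S1.
Proof.
case/existsP => g /eqP->; apply/existsP; exists g^-1.
by rewrite conj4M mulgV conj4_1.
Qed.

Lemma conj_class_eq S1 S2 : conjugate4 S1 S2 -> conj_class S1 = conj_class S2.
Proof.
move=> S12; apply: eq_finset => S.
by apply/idP/idP => [/(conjugate4_trans (conjugate4_sym S12)) | /(conjugate4_trans S12)].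
Qed.

Lemma disj1t_conj S g : disj1t S -> disj1t (conj4 S g).
Proof.
by rewrite /disj1t /= !psupp_conj imset_disjoint //; exact: perm_inj.
Qed.

End Conjugation.

Lemma admissible_conj n (S : tuple4 (2 * n)) g : admissible S -> admissible (conj4 S g).
Proof.
case/and5P => S0 Sinf S1 St /eqP S_1; apply/and5P; split.
- exact: is_prod_disj_transp_conj.
- exact: is_cycle_conj.
- exact: is_prod_disj_transp_conj.
- exact: is_transp_conj.
- by rewrite /conj4 /sig0 /= -!conjMg S_1 conj1g.
Qed.

Lemma is_cycle_conj_ord_pred m (s : 'S_m) :
  is_cycle m s -> exists g, s ^ g = perm (@ord_pred_inj m).
Proof.
case/existsP => x0 /andP[/eqP card_orbit _].
have iter_inj k1 k2 : k1 < m -> k2 < m -> iter k1 s x0 = iter k2 s x0 -> k1 = k2.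
  move=> lt1 lt2 E; have U := uniq_traject_porbit s x0; rewrite card_orbit in U.
  by apply/eqP; rewrite -(nth_uniq x0 _ _ U) ?size_traject // !nth_traject // E.
pose h (j : 'I_m) := iter (m.-1 - j) s x0.
have h_inj : injective h.
  move=> j1 j2 hj12; apply: ord_inj; have [lt1 lt2] := (ltn_ord j1, ltn_ord j2).
  by have := iter_inj _ _ _ _ hj12; lia.
exists (perm h_inj)^-1; apply: conjg_permE => y.
rewrite -(permKV (perm h_inj) y); move: ((perm h_inj)^-1 y) => z; rewrite permK.
apply: (@perm_inj _ (perm h_inj)); rewrite permKV !permE /h ord_pred_val -iterS.
have := ltn_ord z; case: ifP => [/eqP z0 lt_z | z_neq0 lt_z]; last by congr iter; lia.
have -> : (m.-1 - z).+1 = #|porbit s x0| by rewrite card_orbit z0; lia.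
by rewrite subnn iter_porbit.
Qed.

(** * The standard permutations *)

Lemma tperm_val m (a b x : 'I_m) :
  (tperm a b x : nat) =
  if (x : nat) == a then (b : nat) else if (x : nat) == b then (a : nat) else (x : nat).
Proof.
rewrite !val_eqE; case: tpermP => [->|->|/eqP/negbTE-> /eqP/negbTE->]; rewrite ?eqxx //.
by case: eqP => [->|].
Qed.

Lemma tpn_val m i j (x : 'I_m) : 0 < i <= m -> 0 < j <= m ->
  (tpn m i j x : nat) =
  if (x : nat) == i.-1 then j.-1 else if (x : nat) == j.-1 then i.-1 else (x : nat).
Proof.
move=> hi hj; rewrite /tpn /lab.
case: insubP => [a _ <-|]; last by move/negP; case; lia.
by case: insubP => [b _ <-|]; [rewrite tperm_val | move/negP; case; lia].
Qed.

Lemma prod_tpn_val m c k (x : 'I_m) : 2 * k < c <= m.+1 ->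
  ((\prod_(1 <= i < k.+1) tpn m i (c - i))%g x : nat) =
  if (x < k) || (c - 1 - k <= x < c - 1) then c - 2 - x else x.
Proof.
elim: k => [|k IH] hk; first by rewrite big_geq // perm1; case: ifP => //; lia.
rewrite big_nat_recr //= permM tpn_val; [|lia|lia].
by rewrite IH; [have := ltn_ord x; repeat case: ifP; lia | lia].
Qed.

Lemma sigma_infE n (x : 'I_(2 * n)) : sigma_inf n x = ord_pred x.
Proof. exact: permE. Qed.

Lemma sigma_inf_expE n k (x : 'I_(2 * n)) : k <= 2 * n ->
  ((sigma_inf n ^+ k) x : nat) = if k <= x then x - k else x + 2 * n - k.
Proof.
elim: k => [|k IH] hk; first by rewrite expg0 perm1 subn0.
rewrite expgSr permM sigma_infE ord_pred_val IH; last by lia.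
by have := ltn_ord x; repeat case: ifP; lia.
Qed.

Lemma sigma_inf_expnE n (x : 'I_(2 * n)) :
  ((sigma_inf n ^+ n) x : nat) = if n <= x then x - n else x + n.
Proof. by rewrite sigma_inf_expE; [case: ifP; lia | lia]. Qed.

Lemma sigma_inf_conj_exp n k : sigma_inf n ^ (sigma_inf n ^+ k) = sigma_inf n.
Proof. by apply: conjg_permE => y; rewrite -!permM -expgS -expgSr. Qed.

Lemma ordS_commute_sigma_inf n (g : 'S_(2 * n)) :
  sigma_inf n ^ g = sigma_inf n -> forall y, g (ordS y) = ordS (g y).
Proof.
move=> gJ y; apply: ord_pred_inj; rewrite ordSK -sigma_infE -{1}gJ permJ.
by rewrite sigma_infE ordSK.
Qed.

Lemma is_cycle_sigma_inf n : 0 < n -> is_cycle (2 * n) (sigma_inf n).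
Proof.
move=> n_gt0; have x0 : 'I_(2 * n) by apply: (@Ordinal _ 0); lia.
apply/existsP; exists x0; have orbitT : porbit (sigma_inf n) x0 = setT.
  by apply/setP => y; rewrite inE porbit_ord_pred.
by rewrite orbitT cardsT card_ord eqxx; apply/forallP => y; rewrite inE.
Qed.

(* On ordinals, [P0] is [x |-> 2n-1-x] and [P1] is the reflection [x |-> -2-x]
   of Z/2n, which fixes n-1 and 2n-1. *)
Definition P0 n : 'S_(2 * n) := \prod_(1 <= i < n.+1) tpn (2 * n) i (2 * n + 1 - i).
Definition P1 n : 'S_(2 * n) := \prod_(1 <= i < n) tpn (2 * n) i (2 * n - i).
Definition tau_std n i : 'S_(2 * n) := tpn (2 * n) i (2 * n - i).

Lemma P0_val n (x : 'I_(2 * n)) : (P0 n x : nat) = 2 * n - 1 - x.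
Proof. by rewrite prod_tpn_val; [have := ltn_ord x; case: ifP; lia | lia]. Qed.

Lemma P1_val n (x : 'I_(2 * n)) :
  (P1 n x : nat) =
  if ((x : nat) == n.-1) || ((x : nat) == (2 * n).-1) then (x : nat) else 2 * n - 2 - x.
Proof.
case: n x => [[//]|n] x; rewrite /P1 prod_tpn_val; last by lia.
by have := ltn_ord x; repeat case: ifP; lia.
Qed.

Lemma tau_std_val n i (x : 'I_(2 * n)) : 1 <= i < n ->
  (tau_std n i x : nat) =
  if (x : nat) == i.-1 then (2 * n - i).-1
  else if (x : nat) == (2 * n - i).-1 then i.-1 else (x : nat).
Proof. by move=> hi; rewrite tpn_val //; lia. Qed.

Lemma P1_ordS n (x : 'I_(2 * n)) : P1 n (ordS x) = ord_pred (P1 n x).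
Proof.
apply: ord_inj; rewrite P1_val ordS_val ord_pred_val P1_val.
by have := ltn_ord x; repeat case: ifP; lia.
Qed.

Lemma P1K n : involutive (P1 n).
Proof. by move=> x; apply: ord_inj; rewrite !P1_val; have := ltn_ord x; repeat case: ifP; lia. Qed.

Lemma P1_last n (t : 'I_(2 * n)) : (t : nat) = (2 * n).-1 -> P1 n t = t.
Proof. by move=> ht; apply: ord_inj; rewrite P1_val ht eqxx orbT. Qed.

Lemma P1_fixed n (x : 'I_(2 * n)) : P1 n x = x -> (x : nat) = n.-1 \/ (x : nat) = (2 * n).-1.
Proof.
move/(congr1 (@nat_of_ord _)); rewrite P1_val.
by have := ltn_ord x; case: ifP => [/orP[]/eqP|]; [left | right | lia].
Qed.

Lemma P0_ordS_P1 n (x : 'I_(2 * n)) : P0 n x = ordS (P1 n x).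
Proof.
apply: ord_inj; rewrite P0_val ordS_val P1_val.
by have := ltn_ord x; repeat case: ifP; lia.
Qed.

Lemma reflection_eq_P1 n (r : 'S_(2 * n)) (t : 'I_(2 * n)) :
  (t : nat) = (2 * n).-1 -> r t = t -> (forall y, r (ordS y) = ord_pred (r y)) -> r = P1 n.
Proof.
move=> ht rt rS; apply/permP; apply: (ordS_intertwined_eq (x := t) rS (@P1_ordS n)).
by rewrite rt P1_last.
Qed.

Lemma P0K n : involutive (P0 n).
Proof. by move=> x; apply: ord_inj; rewrite !P0_val; have := ltn_ord x; lia. Qed.

Lemma P0_prod_disj_transp n : is_prod_disj_transp n (P0 n).
Proof.
apply/prod_disj_transpP; split; first exact: P0K.
have -> : psupp (P0 n) = setT.
  by apply/setP => x; rewrite !inE -val_eqE /= P0_val; have := ltn_ord x; lia.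
by rewrite cardsT card_ord -mul2n.
Qed.

Lemma card_psupp_P1 n : 0 < n -> #|psupp (P1 n)| = (n.-1).*2.
Proof.
move=> n_gt0; have lt_u : n.-1 < 2 * n by lia.
have lt_t : (2 * n).-1 < 2 * n by lia.
have -> : psupp (P1 n) = ~: [set Ordinal lt_u; Ordinal lt_t].
  by apply/setP => x; rewrite !inE -!val_eqE /= P1_val; have := ltn_ord x; case: ifP; lia.
by rewrite cardsCs setCK card_ord cards2 -val_eqE /= -mul2n; case: eqP => E /=; lia.
Qed.

Lemma P0_sigma_inf_P1 n : P0 n * sigma_inf n * P1 n = 1.
Proof.
apply/permP => x; apply: ord_inj; rewrite !permM perm1 P1_val sigma_infE ord_pred_val P0_val.
by have := ltn_ord x; repeat case: ifP; lia.
Qed.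

Lemma tau_stdE n i (a : 'I_(2 * n)) : 1 <= i < n -> (a : nat) = i.-1 ->
  tau_std n i = tperm a (P1 n a).
Proof.
move=> hi ha; apply/permP => x; apply: ord_inj.
rewrite tau_std_val // tperm_val P1_val ha.
by have := ltn_ord x; repeat case: ifP; lia.
Qed.

Lemma tau_std2 n i : 1 <= i < n -> tau_std n i * tau_std n i = 1.
Proof.
move=> hi; have lt_a : i.-1 < 2 * n by lia.
by rewrite (@tau_stdE _ _ (Ordinal lt_a)) // tperm2.
Qed.

Lemma tau_std_inj n i j : 1 <= i < n -> 1 <= j < n -> tau_std n i = tau_std n j -> i = j.
Proof.
move=> hi hj; have lt_a : i.-1 < 2 * n by lia.
move/(congr1 (fun s : 'S_(2 * n) => (s (Ordinal lt_a) : nat))).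
by rewrite /= !tau_std_val //= eqxx; repeat case: ifP; lia.
Qed.

Lemma tperm_P1_std n (a : 'I_(2 * n)) : P1 n a != a ->
  exists2 i, 1 <= i < n & tperm a (P1 n a) = tau_std n i.
Proof.
move=> moved; have a_val : (P1 n a : nat) != a by [].
have := ltn_ord a; rewrite P1_val in a_val * => lt_a.
case: (ltnP a n.-1) => [lt_a_n | le_n_a].
  by exists a.+1; [lia | rewrite (@tau_stdE _ _ a) //; lia].
exists (P1 n a).+1; first by rewrite P1_val; move: a_val; case: ifP; lia.
rewrite tpermC -{2}(P1K a) (@tau_stdE _ _ (P1 n a)) //.
by rewrite P1_val; move: a_val; case: ifP; lia.
Qed.

(** * Special tuples with disjoint [sigma_1] and [tau] *)

Definition good n (S : tuple4 (2 * n)) := [&& admissible S, special S & disj1t S].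

Definition std_tuple n i : tuple4 (2 * n) :=
  (P0 n, sigma_inf n, P1 n * tau_std n i, tau_std n i).

Section SpecialDisjoint.
Variables (n : nat) (S : tuple4 (2 * n)).
Hypotheses (S_adm : admissible S) (S_spec : special S) (S_disj : disj1t S).

Lemma sig1_tau_commute : commute (sig1 S) (tau S).
Proof. exact: (perm_onC (perm_on_psupp _) (perm_on_psupp _) S_disj). Qed.

Lemma sig1_tau_involutive : involutive (sig1 S * tau S).
Proof.
have /and5P[_ _ /prod_disj_transpP[sig1K _] /is_transpP[[a b] _ tauE] _] := S_adm.
by apply: involutiveM sig1_tau_commute sig1K _; rewrite tauE; exact: tpermK.
Qed.

Lemma sig0_ordS x : sig0 S x = ordS ((sig1 S * tau S) x).
Proof.
have /and5P[_ _ _ _ /eqP S_1] := S_adm; have /and3P[/eqP Sinf _ _] := S_spec.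
have E : (sig1 S * tau S) (ord_pred (sig0 S x)) = x.
  by rewrite permM -sigma_infE -Sinf -!permM !mulgA S_1 perm1.
by rewrite -{2}E sig1_tau_involutive ord_predK.
Qed.

Lemma sig1_tau_ordS y :
  (sig1 S * tau S) (ordS y) = ord_pred ((sig1 S * tau S) y).
Proof.
have /and5P[/prod_disj_transpP[sig0K _] _ _ _ _] := S_adm.
have E : sig0 S ((sig1 S * tau S) y) = ordS y by rewrite sig0_ordS sig1_tau_involutive.
by have := sig0K ((sig1 S * tau S) y); rewrite E sig0_ordS => <-; rewrite ordSK.
Qed.

Lemma special_last (t : 'I_(2 * n)) : (t : nat) = (2 * n).-1 -> sig1 S t = t /\ tau S t = t.
Proof.
move=> /eqP ht; have /and3P[_ /forallP/(_ t) sig1t /forallP/(_ t) taut] := S_spec.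
by split; apply/eqP; [move: sig1t | move: taut]; rewrite ht.
Qed.

Hypothesis n_gt0 : 0 < n.

Lemma sig1_tau_P1 : sig1 S * tau S = P1 n.
Proof.
have lt_t : (2 * n).-1 < 2 * n by lia.
have [sig1t taut] := special_last (t := Ordinal lt_t) erefl.
apply: (reflection_eq_P1 (t := Ordinal lt_t)) => //; last exact: sig1_tau_ordS.
by rewrite permM sig1t taut.
Qed.

Lemma sig0_P0 : sig0 S = P0 n.
Proof. by apply/permP => x; rewrite sig0_ordS sig1_tau_P1 P0_ordS_P1. Qed.

Lemma tau_special : exists2 i, 1 <= i < n & tau S = tau_std n i.
Proof.
have /and5P[_ _ _ /is_transpP[[a b] /= ab tauE] _] := S_adm.
have a_tau : a \in psupp (tau S) by rewrite inE tauE tpermL eq_sym.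
have sig1a : sig1 S a = a.
  by have := disjointFl S_disj a_tau; rewrite inE => /negbFE/eqP.
have P1a : P1 n a = b by rewrite -sig1_tau_P1 permM sig1a tauE tpermL.
by rewrite tauE -P1a; apply: tperm_P1_std; rewrite P1a eq_sym.
Qed.

End SpecialDisjoint.

Lemma std_tuple_good n i : 1 <= i < n -> good (std_tuple n i).
Proof.
move=> hi; have lt_a : i.-1 < 2 * n by lia.
set a := Ordinal lt_a; have tauE := tau_stdE hi (erefl : (a : nat) = i.-1).
have P1a : a != P1 n a by rewrite -(inj_eq (@ord_inj _)) P1_val /=; case: ifP; lia.
have sig1E : P1 n * tau_std n i = tperm a (P1 n a) * P1 n.
  by rewrite tauE; apply/esym/commute_tperm; rewrite P1K tpermC.
have psupp_sig1 : psupp (P1 n * tau_std n i) = psupp (P1 n) :\: [set a; P1 n a].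
  by rewrite sig1E psupp_tpermM_swap //; exact: P1K.
have last_fixed (t : 'I_(2 * n)) : (t : nat) = (2 * n).-1 ->
    P1 n t = t /\ tau_std n i t = t.
  move=> ht; split; first exact: P1_last.
  by apply: ord_inj; rewrite tau_std_val //; repeat case: ifP; lia.
rewrite /good /std_tuple; apply/and3P; split; last first.
- rewrite /disj1t /= psupp_sig1 tauE psupp_tperm //.
  by apply/setDidPl; rewrite setDDl setUid.
- apply/and3P; split=> //; apply/forallP => t; apply/implyP => /eqP ht.
    by have [P1t taut] := last_fixed t ht; rewrite /= permM P1t taut.
  by have [_ taut] := last_fixed t ht; rewrite /= taut.
apply/and5P; split.
- exact: P0_prod_disj_transp.
- by apply: is_cycle_sigma_inf; lia.
- apply/prod_disj_transpP; split.
    rewrite /= sig1E; apply: involutiveM; last exact: P1K; last exact: tpermK.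
    by apply: commute_tperm; rewrite P1K tpermC.
  rewrite /= psupp_sig1 cardsD (setIidPr _); last first.
    by apply/subsetP => x; rewrite !inE => /orP[]/eqP->; rewrite ?P1K -?(eq_sym a).
  by rewrite card_psupp_P1 ?cards2 ?P1a; lia.
- by apply/is_transpP; exists (a, P1 n a); rewrite // tauE.
- by rewrite /= !mulgA -(mulgA _ (tau_std n i)) tauE tperm2 mulg1 P0_sigma_inf_P1.
Qed.

Lemma good_std_tuple n (S : tuple4 (2 * n)) : 0 < n -> good S ->
  exists2 i, 1 <= i < n & S = std_tuple n i.
Proof.
move=> n_gt0 /and3P[S_adm S_spec S_disj].
have [i hi tauE] := tau_special S_adm S_spec S_disj n_gt0.
have sig0E := sig0_P0 S_adm S_spec S_disj n_gt0.
have sig1_tauE := sig1_tau_P1 S_adm S_spec S_disj n_gt0.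
have /and3P[/eqP sinfE _ _] := S_spec.
exists i => //; move: sig0E sig1_tauE sinfE tauE.
case: S {S_adm S_spec S_disj} => [[[s0 s] s1] t].
rewrite /std_tuple /sig0 /siginf /sig1 /tau /= => -> <- -> ->.
by rewrite -mulgA tau_std2 ?mulg1.
Qed.

Lemma conj_std_tuple n i : 1 <= i < n ->
  conj4 (std_tuple n i) (sigma_inf n ^+ n) = std_tuple n (n - i).
Proof.
move=> hi; have hi' : 1 <= n - i < n by lia.
have P0J : P0 n ^ (sigma_inf n ^+ n) = P0 n.
  apply: conjg_permE => y; apply: ord_inj; rewrite P0_val !sigma_inf_expnE P0_val.
  by have := ltn_ord y; repeat case: ifP; lia.
have P1J : P1 n ^ (sigma_inf n ^+ n) = P1 n.
  apply: conjg_permE => y; apply: ord_inj; rewrite P1_val !sigma_inf_expnE P1_val.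
  by have := ltn_ord y; repeat case: ifP; lia.
have tauJ : tau_std n i ^ (sigma_inf n ^+ n) = tau_std n (n - i).
  apply: conjg_permE => y; apply: ord_inj.
  rewrite tau_std_val // !sigma_inf_expnE tau_std_val //.
  by have := ltn_ord y; repeat case: ifP; lia.
by rewrite /conj4 /std_tuple /= conjMg P0J P1J tauJ sigma_inf_conj_exp.
Qed.

Lemma std_tuple_conj_rigid n i j (g : 'S_(2 * n)) : 1 <= i < n ->
  conj4 (std_tuple n i) g = std_tuple n j -> g = 1 \/ g = sigma_inf n ^+ n.
Proof.
move=> hi; rewrite /conj4 /std_tuple /= => -[_ sigmaJ P1tauJ tauJ].
have P1J : P1 n ^ g = P1 n by move: P1tauJ; rewrite conjMg tauJ => /mulIg.
have lt_t : (2 * n).-1 < 2 * n by lia.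
set t := Ordinal lt_t.
have gS := ordS_commute_sigma_inf sigmaJ.
have g_rot (h : 'S_(2 * n)) : (forall y, h (ordS y) = ordS (h y)) -> h t = g t -> g = h.
  by move=> hS ht; apply/permP; apply: (ordS_intertwined_eq (x := t) gS hS).
have : P1 n (g t) = g t by rewrite -{1}P1J permJ P1_last.
case/P1_fixed => gt; [right | left].
- apply: g_rot; first exact: ordS_commute_sigma_inf (sigma_inf_conj_exp n n).
  by apply: ord_inj; rewrite sigma_inf_expnE gt /=; case: ifP; lia.
- by apply: g_rot => [y|]; rewrite ?perm1 //; apply: ord_inj; rewrite gt.
Qed.

Lemma good_conjugateP n (S S' : tuple4 (2 * n)) : 0 < n -> good S -> good S' -> S <> S' ->
  conjugate4 S S' <-> S' = conj4 S (sigma_inf n ^+ n).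
Proof.
move=> n_gt0 goodS goodS' neqSS'; split.
  2: by move->; apply/existsP; exists (sigma_inf n ^+ n).
case/existsP => g /eqP S'E.
have [i hi SE] := good_std_tuple n_gt0 goodS; have [j hj S'E'] := good_std_tuple n_gt0 goodS'.
have : conj4 (std_tuple n i) g = std_tuple n j by rewrite -SE -S'E.
case/std_tuple_conj_rigid => // [g1 | g_sigma].
  by case: neqSS'; rewrite S'E g1 conj4_1.
by rewrite S'E g_sigma.
Qed.

Lemma conj_sigma_inf_exp_fixedP n (S : tuple4 (2 * n)) : 0 < n -> good S ->
  conj4 S (sigma_inf n ^+ n) = S <-> ~~ odd n /\ tau S = tpn (2 * n) n./2 (3 * n./2).
Proof.
move=> n_gt0 /(good_std_tuple n_gt0)[i hi ->]; rewrite conj_std_tuple //.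
have n_half := odd_double_half n; split.
  move/(congr1 (@tau _)) => /= tauE; have ni : n - i = i by apply: (tau_std_inj _ _ tauE); lia.
  have -> : n./2 = i by lia.
  by split; [apply/negP => odd_n; lia | rewrite /tau /= /tau_std; congr tpn; lia].
case=> /negbTE even_n; rewrite /tau /= => tauE; rewrite even_n /= in n_half.
have half_i : n./2 = i.
  by apply: (@tau_std_inj n); [lia | lia | rewrite tauE /tau_std; congr tpn; lia].
by have -> : n - i = i by lia.
Qed.

(** * Counting conjugacy classes *)

Lemma admissible_common_fixed n (S : tuple4 (2 * n)) : 2 <= n -> admissible S ->
  exists p, sig1 S p = p /\ tau S p = p.
Proof.
move=> n_ge2 /and5P[_ _ /prod_disj_transpP[_ card_sig1] /is_transpP[[a b] /= ab tauE] _].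
have card_tau : #|psupp (tau S)| = 2 by rewrite tauE psupp_tperm // cards2 ab.
have : 0 < #|~: (psupp (sig1 S) :|: psupp (tau S))|.
  have := cardsC (psupp (sig1 S) :|: psupp (tau S)); rewrite card_ord.
  by rewrite cardsU card_sig1 card_tau -mul2n; lia.
by case/card_gt0P => p; rewrite !inE negb_or !negbK => /andP[/eqP ? /eqP ?]; exists p.
Qed.

Lemma rotate_special n (S : tuple4 (2 * n)) p : siginf S = sigma_inf n ->
  sig1 S p = p -> tau S p = p -> special (conj4 S (sigma_inf n ^+ p.+1)).
Proof.
move=> Sinf sig1p taup; set h := sigma_inf n ^+ p.+1.
have hp (x : 'I_(2 * n)) : (x : nat) = (2 * n).-1 -> x = h p.
  move=> hx; apply: ord_inj; rewrite hx sigma_inf_expE; last by have := ltn_ord p; lia.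
  by have := ltn_ord p; case: ifP; lia.
apply/and3P; split.
- by rewrite /conj4 /= Sinf sigma_inf_conj_exp.
- by apply/forallP => x; apply/implyP => /eqP/hp->; rewrite /= permJ sig1p.
- by apply/forallP => x; apply/implyP => /eqP/hp->; rewrite /= permJ taup.
Qed.

Lemma admissible_disjoint_conj_std n (S : tuple4 (2 * n)) : 2 <= n ->
  admissible S -> disj1t S -> exists2 i, 1 <= i <= n./2 & conjugate4 S (std_tuple n i).
Proof.
move=> n_ge2 S_adm S_disj.
have [g1 Sinf1] : exists g, siginf S ^ g = sigma_inf n.
  by apply: is_cycle_conj_ord_pred; case/and5P: S_adm.
set S1 := conj4 S g1.
have [p [sig1p taup]] := admissible_common_fixed n_ge2 (admissible_conj g1 S_adm).
set S2 := conj4 S1 (sigma_inf n ^+ p.+1).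
have S2_good : good S2.
  by rewrite /good !admissible_conj ?disj1t_conj ?rotate_special.
have S_S2 : conjugate4 S S2.
  by apply/existsP; exists (g1 * sigma_inf n ^+ p.+1); rewrite /S2 /S1 conj4M.
have [i hi S2E] := good_std_tuple (ltnW n_ge2) S2_good; rewrite S2E in S_S2.
have n_half := odd_double_half n.
have [le_i_half|lt_half_i] := leqP i n./2; first by exists i => //; lia.
exists (n - i); first lia.
apply: (conjugate4_trans S_S2); rewrite -conj_std_tuple //.
by apply/existsP; exists (sigma_inf n ^+ n).
Qed.

Lemma conj_classP m (S X : tuple4 m) : reflect (conjugate4 S X) (X \in conj_class S).
Proof. by rewrite in_set; exact: idP. Qed.

Lemma admissible_disjointP n (S : tuple4 (2 * n)) :
  reflect (admissible S /\ disj1t S)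
          (S \in [set S : tuple4 (2 * n) | admissible S && disj1t S]).
Proof. by rewrite in_set; exact: andP. Qed.

Definition std_class n (j : 'I_n./2) := conj_class (std_tuple n j.+1).

Lemma admissible_disjoint_classes n : 2 <= n ->
  [set conj_class S | S in [set S : tuple4 (2 * n) | admissible S && disj1t S]] =
  @std_class n @: setT.
Proof.
move=> n_ge2; have n_half := odd_double_half n.
apply/setP => C; apply/imsetP/imsetP => [[S /admissible_disjointP[S_adm S_disj] ->]|[j _ ->]].
  have [i hi S_std] := admissible_disjoint_conj_std n_ge2 S_adm S_disj.
  have lt_i : i.-1 < n./2 by lia.
  exists (Ordinal lt_i); first exact: in_setT.
  rewrite /std_class (conj_class_eq S_std).
  by congr (conj_class (std_tuple n _)); rewrite /=; lia.
exists (std_tuple n j.+1) => //; apply/admissible_disjointP.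
by have /and3P[] : good (std_tuple n j.+1) by apply: std_tuple_good; have := ltn_ord j; lia.
Qed.

Lemma std_class_inj n : 2 <= n -> injective (@std_class n).
Proof.
move=> n_ge2 j1 j2 Cj12; have n_half := odd_double_half n.
have [lt1 lt2] := (ltn_ord j1, ltn_ord j2).
have std_good (j : 'I_n./2) : good (std_tuple n j.+1).
  by apply: std_tuple_good; have := ltn_ord j; lia.
have tau_eq i j : 1 <= i < n -> 1 <= j < n ->
    tau (std_tuple n i) = tau (std_tuple n j) -> i = j.
  by move=> hi hj /(@tau_std_inj n); apply; lia.
have /conj_classP : std_tuple n j2.+1 \in std_class j1.
  by rewrite Cj12; apply/conj_classP; exact: conjugate4_refl.
have [E _ | neq] := eqVneq (std_tuple n j1.+1) (std_tuple n j2.+1).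
  by apply: ord_inj; have := tau_eq _ _ _ _ (congr1 (@tau _) E); lia.
move/(good_conjugateP (ltnW n_ge2) (std_good j1) (std_good j2) (elimN eqP neq)).
rewrite conj_std_tuple; last lia.
move/(congr1 (@tau _)) => tauE; apply: ord_inj.
by have := tau_eq _ _ _ _ tauE; lia.
Qed.

Lemma card_conj_classes n : 2 <= n ->
  #|[set conj_class S | S in [set S : tuple4 (2 * n) | admissible S && disj1t S]]| = n./2.
Proof.
move=> n_ge2; rewrite admissible_disjoint_classes // card_imset; last exact: std_class_inj.
by rewrite cardsT card_ord.
Qed.

Theorem mainTheorem12 (n : nat) (hn : (2 <= n)%N) :
  let P0 : 'S_(2 * n) := \prod_(1 <= i < n.+1) tpn (2 * n) i (2 * n + 1 - i) in
  let P1 : 'S_(2 * n) := \prod_(1 <= i < n) tpn (2 * n) i (2 * n - i) in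
  let good (S : tuple4 (2 * n)) := [&& admissible S, special S & disj1t S] in
  (forall S : tuple4 (2 * n), good S ->
     [/\ sig0 S = P0, sig1 S * tau S = P1 &
         exists2 i, (1 <= i < n)%N & tau S = tpn (2 * n) i (2 * n - i)]) /\
  (forall i, (1 <= i < n)%N ->
     good (P0, sigma_inf n, P1 * tpn (2 * n) i (2 * n - i), tpn (2 * n) i (2 * n - i))) /\
  (forall S S' : tuple4 (2 * n), good S -> good S' -> S <> S' ->
     (conjugate4 S S' <-> S' = conj4 S (sigma_inf n ^+ n))) /\
  (forall S : tuple4 (2 * n), good S ->
     (conj4 S (sigma_inf n ^+ n) = S <->
      ~~ odd n /\ tau S = tpn (2 * n) n./2 (3 * n./2))) /\
  #|[set conj_class S | S in [set S : tuple4 (2 * n) | admissible S && disj1t S]]| = n./2.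
Proof.
have n_gt0 : 0 < n by lia.
split; [|split; [|split; [|split]]].
- move=> S /and3P[S_adm S_spec S_disj]; split.
  + exact: sig0_P0.
  + exact: sig1_tau_P1.
  + exact: tau_special.
- exact: std_tuple_good.
- move=> S S'; exact: good_conjugateP.
- move=> S; exact: conj_sigma_inf_exp_fixedP.
- exact: card_conj_classes.
Qed.
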